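(* Let $\mathscr{C}=\left\{\sum_{i=1}^{\infty} t_i 3^{-i} : t_i\in\{0,2\}\right\}$ be the middle-third Cantor set and $\mathscr{C}^{(2)}=\{x^2 : x\in\mathscr{C}\}$. For every integer $k\geq 2$, the interval \[\left[\tfrac{36}{81}+\tfrac{8}{9}\cdot\tfrac{1}{3^{2k}}+\tfrac{1}{3^{2k}},\ \tfrac{36}{81}+\tfrac{4}{3^{2k+1}}+\tfrac{1}{3^{4k}}+\tfrac{2}{3^{2k}}+\tfrac{4}{9}\cdot\tfrac{1}{3^{2k}}\right]\] is contained in $\mathscr{C}^{(2)}+\mathscr{C}^{(2)}+\mathscr{C}^{(2)}+\mathscr{C}^{(2)}=\{y_1+y_2+y_3+y_4 : y_j\in\mathscr{C}^{(2)}\}$. *)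

From Stdlib Require Import Reals.
Open Scope R_scope.

(* Middle-third Cantor set: x = sum_{i>=1} t_i 3^{-i}, t_i in {0,2}.
   Digit sequence indexed from 0: t n is the digit t_{n+1}. *)
Definition Cantor (x : R) : Prop :=
  exists t : nat -> R,
    (forall n, t n = 0 \/ t n = 2) /\
    infinite_sum (fun n => t n / 3 ^ (S n)) x.

Definition CantorSq (y : R) : Prop := exists x, Cantor x /\ y = x ^ 2.

Definition CantorSq4 (z : R) : Prop :=
  exists y1 y2 y3 y4, CantorSq y1 /\ CantorSq y2 /\ CantorSq y3 /\ CantorSq y4 /\
    z = y1 + y2 + y3 + y4.

(* Put x1 = 2/3 + c/9^k and x2, x3, x4 = (2 + d)/3^(k+1), (2 + d')/3^(k+1), 2/3^(k+1)
   with c, d, d' in the Cantor set.  Then x1^2 + x2^2 + x3^2 + x4^2 equals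
   4/9 + 4 (3 + G(c, d, d')) / (9 * 9^k) with G = 3c + e c^2 + (d + d^2/4) + (d' + d'^2/4)
   and e = 9 / (4 * 9^k) <= 1, and the interval of the theorem corresponds to values of G
   inside [0, G(1,1,1)].  So it suffices that G maps the cube of Cantor sets onto
   [G(0,0,0), G(1,1,1)].  G is monotone, and on every triadic cube of side 3u the images of
   its eight subcubes of side u (corners shifted by 0 or 2u in each coordinate), taken in
   lexicographic order, are intervals each of which overlaps the previous one.  Hence a
   target value can be kept inside the image of a nested sequence of such subcubes; their
   corners are partial sums of ternary expansions with digits in {0, 2}, and since G is
   Lipschitz along the diagonal the limit point is mapped exactly onto the target. *)

From Stdlib Require Import Reals Lra Lia List.
Import ListNotations.
Open Scope R_scope.

Lemma pow3_pos n : 0 < 3 ^ n.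
Proof. apply pow_lt; lra. Qed.

Lemma inv_pow3_pos n : 0 < / 3 ^ n.
Proof. apply Rinv_0_lt_compat, pow3_pos. Qed.

Lemma inv_pow3_S n : / 3 ^ n = 3 * / 3 ^ S n.
Proof. simpl. field. apply pow_nonzero. lra. Qed.

Lemma sum_prepend_digit (t : nat -> R) (d : R) n :
  sum_f_R0 (fun i => (match i with 0 => d | S j => t j end) / 3 ^ S i) (S n)
  = d / 3 + sum_f_R0 (fun i => t i / 3 ^ S i) n / 3.
Proof.
  induction n as [|n IH].
  - simpl. field.
  - rewrite (tech5 _ (S n)), IH. simpl. field. apply pow_nonzero. lra.
Qed.

Lemma Cantor_prepend d x : d = 0 \/ d = 2 -> Cantor x -> Cantor (d / 3 + x / 3).
Proof.
  intros Hd [t [Ht Hx]].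
  exists (fun i => match i with 0 => d | S j => t j end). split.
  - intros [|n]; auto.
  - intros eps Heps. destruct (Hx (3 * eps)) as [N HN]; [lra|].
    exists (S N). intros [|n] Hn; [lia|].
    specialize (HN n ltac:(lia)). unfold Rdist in *. rewrite sum_prepend_digit.
    apply Rabs_def2 in HN. apply Rabs_def1; lra.
Qed.

Lemma Cantor_0 : Cantor 0.
Proof.
  exists (fun _ => 0). split; [auto|].
  intros eps Heps. exists 0%nat. intros n _. unfold Rdist.
  rewrite sum_eq_R0 by (intros; unfold Rdiv; ring).
  rewrite Rminus_0_r, Rabs_R0. exact Heps.
Qed.

Lemma Cantor_div_pow3 x m : Cantor x -> Cantor (x / 3 ^ m).
Proof.
  intros Hx. induction m as [|m IH].
  - replace (x / 3 ^ 0) with x by (simpl; field). exact Hx.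
  - replace (x / 3 ^ S m) with (0 / 3 + x / 3 ^ m / 3).
    + apply Cantor_prepend; auto.
    + simpl. field. apply pow_nonzero. lra.
Qed.

Lemma Cantor_two_thirds_plus x m : Cantor x -> Cantor (2/3 + x / 3 ^ S m).
Proof.
  intros Hx. replace (2/3 + x / 3 ^ S m) with (2/3 + x / 3 ^ m / 3).
  - apply Cantor_prepend; [right; reflexivity | apply Cantor_div_pow3, Hx].
  - simpl. field. apply pow_nonzero. lra.
Qed.

Definition ternary_digit (s : bool) : R := if s then 2 else 0.

Fixpoint cantor_partial (t : nat -> bool) (n : nat) : R :=
  match n with
  | O => 0
  | S m => cantor_partial t m + ternary_digit (t m) / 3 ^ S m
  end.

Lemma cantor_partial_as_sum t n :
  sum_f_R0 (fun i => ternary_digit (t i) / 3 ^ S i) n = cantor_partial t (S n).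
Proof.
  induction n as [|n IH].
  - simpl. ring.
  - rewrite tech5, IH. reflexivity.
Qed.

Lemma cantor_partial_step t n :
  cantor_partial t n <= cantor_partial t (S n) /\
  cantor_partial t (S n) + / 3 ^ S n <= cantor_partial t n + / 3 ^ n.
Proof.
  rewrite (inv_pow3_S n). cbn [cantor_partial]. unfold Rdiv.
  pose proof (inv_pow3_pos (S n)).
  destruct (t n); unfold ternary_digit; lra.
Qed.

Lemma cantor_partial_window t n m : (n <= m)%nat ->
  cantor_partial t n <= cantor_partial t m /\
  cantor_partial t m + / 3 ^ m <= cantor_partial t n + / 3 ^ n.
Proof.
  induction 1 as [|m _ IH]; [lra|]. pose proof (cantor_partial_step t m). lra.
Qed.

Lemma cantor_partial_le t n m : cantor_partial t m <= cantor_partial t n + / 3 ^ n.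
Proof.
  pose proof (inv_pow3_pos n). pose proof (inv_pow3_pos m).
  destruct (Nat.le_gt_cases n m) as [Hnm|Hmn].
  - pose proof (cantor_partial_window t n m Hnm). lra.
  - pose proof (cantor_partial_window t m n (Nat.lt_le_incl _ _ Hmn)). lra.
Qed.

Lemma lim_le_upper_bound u l M : Un_cv u l -> (forall n, u n <= M) -> l <= M.
Proof.
  intros Hu HM. apply Rnot_lt_le. intros HMl.
  destruct (Hu (l - M)) as [N HN]; [lra|].
  specialize (HN N (le_n N)). specialize (HM N). unfold Rdist in HN.
  apply Rabs_def2 in HN. lra.
Qed.

Lemma Cantor_of_digits t : exists x, Cantor x /\
  forall n, cantor_partial t n <= x <= cantor_partial t n + / 3 ^ n.
Proof.
  assert (Hgrow : Un_growing (fun n => cantor_partial t (S n)))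
    by (intro n; apply cantor_partial_step).
  destruct (growing_cv _ Hgrow) as [x Hx].
  { exists (cantor_partial t 0 + / 3 ^ 0). intros r [n ->]. apply cantor_partial_le. }
  exists x. split.
  - exists (fun n => ternary_digit (t n)). split.
    + intro n. unfold ternary_digit. destruct (t n); auto.
    + intros eps Heps. destruct (Hx eps Heps) as [N HN].
      exists N. intros n Hn. rewrite cantor_partial_as_sum. exact (HN n Hn).
  - intro n. split.
    + pose proof (growing_ineq _ _ Hgrow Hx n). pose proof (cantor_partial_step t n). lra.
    + apply (lim_le_upper_bound _ _ _ Hx). intro m. apply cantor_partial_le.
Qed.

Section FirstReaching.
Context {T : Type} (lo hi : T -> R).

Fixpoint chained (x : T) (ys : list T) : Prop :=
  match ys with
  | [] => True
  | y :: ys' => lo y <= hi x /\ chained y ys'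
  end.

Fixpoint first_reaching (w : R) (x : T) (ys : list T) : T :=
  match ys with
  | [] => x
  | y :: ys' => if Rle_dec w (hi x) then x else first_reaching w y ys'
  end.

Lemma first_reaching_spec w x ys y :
  chained x ys -> In y (x :: ys) -> lo x <= w -> w <= hi y ->
  lo (first_reaching w x ys) <= w <= hi (first_reaching w x ys).
Proof.
  revert x. induction ys as [|z ys IH]; intros x Hch Hy Hlo Hhi; simpl in *.
  - destruct Hy as [<-|[]]. lra.
  - destruct Hch as [Hzx Hch]. destruct (Rle_dec w (hi x)) as [Hw|Hw]; [lra|].
    apply IH; [exact Hch | | lra | exact Hhi].
    destruct Hy as [<-|Hy]; [contradiction | exact Hy].
Qed.

End FirstReaching.

Lemma eq_of_dist_le_geometric K x y : (forall n, Rabs (x - y) <= K * / 3 ^ n) -> x = y.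
Proof.
  intros Hxy. apply cond_eq. intros eps Heps.
  assert (HK : 0 < Rabs K + 1) by (pose proof (Rabs_pos K); lra).
  destruct (pow_lt_1_zero (/ 3) ltac:(rewrite Rabs_right; lra) (eps / (Rabs K + 1)))
    as [N HN]; [apply Rdiv_lt_0_compat; lra|].
  specialize (HN N (le_n N)). rewrite pow_inv, Rabs_right in HN by (left; apply inv_pow3_pos).
  apply Rmult_lt_compat_l with (r := Rabs K + 1) in HN; [|lra].
  replace ((Rabs K + 1) * (eps / (Rabs K + 1))) with eps in HN by (field; lra).
  specialize (Hxy N). pose proof (inv_pow3_pos N). pose proof (Rle_abs K). nra.
Qed.

Section CantorCubeImage.
Variables (F : R -> R -> R -> R) (L : R).

Definition apply3 (x : R * R * R) : R := let '(a, b, c) := x in F a b c.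

Definition translate (h : R) (x : R * R * R) : R * R * R :=
  let '(a, b, c) := x in (a + h, b + h, c + h).

Definition subcorner (u : R) (x : R * R * R) (s : bool * bool * bool) : R * R * R :=
  let '(a, b, c) := x in let '(s1, s2, s3) := s in
  (a + ternary_digit s1 * u, b + ternary_digit s2 * u, c + ternary_digit s3 * u).

Definition cube_in_unit (h : R) (x : R * R * R) : Prop :=
  let '(a, b, c) := x in
  0 <= a /\ 0 <= b /\ 0 <= c /\ a + h <= 1 /\ b + h <= 1 /\ c + h <= 1.

Definition later_subcubes : list (bool * bool * bool) :=
  [(false, false, true); (false, true, false); (false, true, true);
   (true, false, false); (true, false, true); (true, true, false); (true, true, true)].

Hypothesis F_monotone : forall a a' b b' c c',
  0 <= a <= a' -> 0 <= b <= b' -> 0 <= c <= c' -> F a b c <= F a' b' c'.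

Hypothesis F_diagonal_lipschitz : forall h x, 0 <= h -> cube_in_unit h x ->
  apply3 (translate h x) - apply3 x <= L * h.

Hypothesis F_subcubes_chained : forall u x, 0 < u -> cube_in_unit (3 * u) x ->
  chained (fun s => apply3 (subcorner u x s)) (fun s => apply3 (translate u (subcorner u x s)))
    (false, false, false) later_subcubes.

Variable w : R.

Definition choose_subcube (u : R) (x : R * R * R) : bool * bool * bool :=
  first_reaching (fun s => apply3 (translate u (subcorner u x s))) w
    (false, false, false) later_subcubes.

Lemma choose_subcube_spec u x : 0 < u -> cube_in_unit (3 * u) x ->
  apply3 x <= w <= apply3 (translate (3 * u) x) ->
  let y := subcorner u x (choose_subcube u x) in
  cube_in_unit u y /\ apply3 y <= w <= apply3 (translate u y).
Proof.
  intros Hu Hx Hw. destruct x as [[a b] c].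
  set (s := choose_subcube u (a, b, c)).
  assert (Hs : apply3 (subcorner u (a, b, c) s) <= w <=
               apply3 (translate u (subcorner u (a, b, c) s))).
  { unfold s, choose_subcube.
    apply (first_reaching_spec (fun s => apply3 (subcorner u (a, b, c) s))
      (fun s => apply3 (translate u (subcorner u (a, b, c) s))) w _ _ (true, true, true)).
    - apply F_subcubes_chained; assumption.
    - simpl; tauto.
    - simpl in Hw |- *. unfold ternary_digit. rewrite Rmult_0_l, !Rplus_0_r. lra.
    - simpl in Hw |- *. unfold ternary_digit.
      replace (a + 2 * u + u) with (a + 3 * u) by ring.
      replace (b + 2 * u + u) with (b + 3 * u) by ring.
      replace (c + 2 * u + u) with (c + 3 * u) by ring. lra. }
  split; [|exact Hs].
  simpl in Hx. destruct s as [[s1 s2] s3]. simpl.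
  destruct s1, s2, s3; unfold ternary_digit; lra.
Qed.

Fixpoint corner (n : nat) : R * R * R :=
  match n with
  | O => (0, 0, 0)
  | S m => subcorner (/ 3 ^ S m) (corner m) (choose_subcube (/ 3 ^ S m) (corner m))
  end.

Definition digits (n : nat) : bool * bool * bool := choose_subcube (/ 3 ^ S n) (corner n).

Lemma corner_eq n : corner n =
  (cantor_partial (fun i => fst (fst (digits i))) n,
   cantor_partial (fun i => snd (fst (digits i))) n,
   cantor_partial (fun i => snd (digits i)) n).
Proof.
  induction n as [|n IH]; [reflexivity|].
  change (corner (S n)) with (subcorner (/ 3 ^ S n) (corner n) (digits n)).
  rewrite IH. cbn [cantor_partial]. destruct (digits n) as [[s1 s2] s3]. reflexivity.
Qed.

Hypothesis w_range : F 0 0 0 <= w <= F 1 1 1.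

Lemma corner_invariant n :
  cube_in_unit (/ 3 ^ n) (corner n) /\
  apply3 (corner n) <= w <= apply3 (translate (/ 3 ^ n) (corner n)).
Proof.
  induction n as [|n [Hcube Hw]].
  - simpl. rewrite Rinv_1, !Rplus_0_l. lra.
  - rewrite (inv_pow3_S n) in Hcube, Hw.
    apply choose_subcube_spec; [apply inv_pow3_pos | exact Hcube | exact Hw].
Qed.

Theorem Cantor_cube_image : exists a b c, Cantor a /\ Cantor b /\ Cantor c /\ F a b c = w.
Proof.
  destruct (Cantor_of_digits (fun i => fst (fst (digits i)))) as [a [Ha Ba]].
  destruct (Cantor_of_digits (fun i => snd (fst (digits i)))) as [b [Hb Bb]].
  destruct (Cantor_of_digits (fun i => snd (digits i))) as [c [Hc Bc]].
  exists a, b, c. do 3 (split; [assumption|]).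
  apply (eq_of_dist_le_geometric L). intro n.
  destruct (corner_invariant n) as [Hcube Hw]. rewrite corner_eq in Hcube, Hw.
  specialize (Ba n). specialize (Bb n). specialize (Bc n).
  pose proof (inv_pow3_pos n) as Hu. set (u := / 3 ^ n) in *.
  pose proof (F_diagonal_lipschitz u _ (Rlt_le _ _ Hu) Hcube) as Hlip.
  simpl in Hcube, Hw, Hlip.
  set (pa := cantor_partial (fun i => fst (fst (digits i))) n) in *.
  set (pb := cantor_partial (fun i => snd (fst (digits i))) n) in *.
  set (pc := cantor_partial (fun i => snd (digits i)) n) in *.
  pose proof (F_monotone pa a pb b pc c ltac:(lra) ltac:(lra) ltac:(lra)).
  pose proof (F_monotone a (pa + u) b (pb + u) c (pc + u) ltac:(lra) ltac:(lra) ltac:(lra)).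
  apply Rabs_le. lra.
Qed.

End CantorCubeImage.

Definition excess_form (e c d d' : R) : R :=
  3 * c + e * c ^ 2 + (d + d ^ 2 / 4) + (d' + d' ^ 2 / 4).

Section ExcessForm.
Variable e : R.
Hypotheses (He0 : 0 <= e) (He1 : e <= 1).

Lemma excess_form_monotone a a' b b' c c' :
  0 <= a <= a' -> 0 <= b <= b' -> 0 <= c <= c' ->
  excess_form e a b c <= excess_form e a' b' c'.
Proof.
  intros. unfold excess_form.
  assert (e * a ^ 2 <= e * a' ^ 2) by (apply Rmult_le_compat_l; [lra | simpl; nra]).
  nra.
Qed.

Lemma excess_form_diagonal_lipschitz h x : 0 <= h -> cube_in_unit h x ->
  apply3 (excess_form e) (translate h x) - apply3 (excess_form e) x <= 8 * h.
Proof.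
  destruct x as [[a b] c]. simpl. intros Hh (Ha & Hb & Hc & Ha1 & Hb1 & Hc1).
  unfold excess_form.
  pose proof (Rmult_le_pos _ _ He0 Ha). pose proof (Rmult_le_pos _ _ He0 Hh). nra.
Qed.

Lemma excess_form_subcubes_chained u x : 0 < u -> cube_in_unit (3 * u) x ->
  chained (fun s => apply3 (excess_form e) (subcorner u x s))
    (fun s => apply3 (excess_form e) (translate u (subcorner u x s)))
    (false, false, false) later_subcubes.
Proof.
  destruct x as [[a b] c]. simpl. intros Hu (Ha & Hb & Hc & Ha1 & Hb1 & Hc1).
  unfold excess_form, ternary_digit.
  pose proof (Rmult_le_pos _ _ He0 Ha). pose proof (Rmult_le_pos _ _ He0 (Rlt_le _ _ Hu)).
  pose proof (Rmult_le_pos _ _ (Rlt_le _ _ Hu) Ha).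
  pose proof (Rmult_le_pos _ _ (Rlt_le _ _ Hu) Hb).
  pose proof (Rmult_le_pos _ _ (Rlt_le _ _ Hu) Hc).
  repeat split; nra.
Qed.

Lemma excess_form_Cantor_image w : 0 <= w <= excess_form e 1 1 1 ->
  exists c d d', Cantor c /\ Cantor d /\ Cantor d' /\ excess_form e c d d' = w.
Proof.
  intros Hw. apply (Cantor_cube_image _ 8).
  - exact excess_form_monotone.
  - exact excess_form_diagonal_lipschitz.
  - exact excess_form_subcubes_chained.
  - unfold excess_form at 1. simpl. lra.
Qed.

End ExcessForm.

Lemma four_squares_identity B c d d' : B <> 0 ->
  (2/3 + c / B ^ 2) ^ 2 + ((2/3 + d/3) / B) ^ 2 + ((2/3 + d'/3) / B) ^ 2 + ((2/3 + 0/3) / B) ^ 2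
  = 4/9 + 4 * (3 + excess_form (9 / (4 * B ^ 2)) c d d') / (9 * B ^ 2).
Proof. intros HB. unfold excess_form. field. exact HB. Qed.

Lemma scaled_window A z : 9/4 <= A ->
  36/81 + (8/9) * (1 / A) + 1 / A <= z ->
  z <= 36/81 + 4 / (3 * A) + 1 / (A * A) + 2 / A + (4/9) * (1 / A) ->
  0 <= 9 * A * (z - 4/9) / 4 - 3 <= excess_form (9 / (4 * A)) 1 1 1.
Proof.
  intros HA Hlo Hhi. unfold excess_form.
  set (a := 1 / A) in *.
  assert (Ha : A * a = 1) by (unfold a; field; lra).
  replace (4 / (3 * A)) with (4/3 * a) in Hhi by (unfold a; field; lra).
  replace (1 / (A * A)) with (a * a) in Hhi by (unfold a; field; lra).
  replace (2 / A) with (2 * a) in Hhi by (unfold a; field; lra).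
  replace (9 / (4 * A)) with (9/4 * a) by (unfold a; field; lra).
  assert (A * a * a = a) by (rewrite Ha; ring).
  split; nra.
Qed.

Lemma excess_weight_bounds A : 9/4 <= A -> 0 <= 9 / (4 * A) <= 1.
Proof.
  intros HA. split.
  - apply Rlt_le, Rdiv_lt_0_compat; lra.
  - apply (Rmult_le_reg_r (4 * A)); [lra|].
    unfold Rdiv. rewrite Rmult_assoc, Rinv_l; lra.
Qed.

Theorem mainTheorem3 (k : nat) (hk : (2 <= k)%nat) (z : R) :
  36/81 + (8/9) * (1 / 3 ^ (2*k)) + 1 / 3 ^ (2*k) <= z ->
  z <= 36/81 + 4 / 3 ^ (2*k+1) + 1 / 3 ^ (4*k) + 2 / 3 ^ (2*k)
         + (4/9) * (1 / 3 ^ (2*k)) ->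
  CantorSq4 z.
Proof.
  intros Hlo Hhi.
  set (B := 3 ^ k).
  assert (HB : 3 <= B).
  { unfold B. replace k with (S (k - 1)) by lia. simpl. pose proof (pow_R1_Rle 3 (k - 1)). lra. }
  assert (E2 : 3 ^ (2 * k) = B ^ 2) by (unfold B; rewrite <- pow_mult; f_equal; lia).
  assert (E21 : 3 ^ (2 * k + 1) = 3 * B ^ 2) by (rewrite pow_add, E2; ring).
  assert (E4 : 3 ^ (4 * k) = B ^ 2 * B ^ 2).
  { replace (4 * k)%nat with (2 * k + 2 * k)%nat by lia. rewrite pow_add, E2. ring. }
  rewrite E21, E4, E2 in Hhi. rewrite E2 in Hlo.
  assert (HA : 9/4 <= B ^ 2) by nra.
  destruct (excess_weight_bounds _ HA) as [He0 He1].
  destruct (excess_form_Cantor_image _ He0 He1 _ (scaled_window _ z HA Hlo Hhi))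
    as (c & d & d' & Hc & Hd & Hd' & Hcdd').
  exists ((2/3 + c / B ^ 2) ^ 2), (((2/3 + d/3) / B) ^ 2), (((2/3 + d'/3) / B) ^ 2),
    (((2/3 + 0/3) / B) ^ 2).
  repeat split.
  - exists (2/3 + c / B ^ 2). split; [|reflexivity].
    rewrite <- E2. replace (2 * k)%nat with (S (2 * k - 1)) by lia.
    apply Cantor_two_thirds_plus, Hc.
  - exists ((2/3 + d/3) / B). split; [|reflexivity]. apply Cantor_div_pow3, Cantor_prepend; auto.
  - exists ((2/3 + d'/3) / B). split; [|reflexivity]. apply Cantor_div_pow3, Cantor_prepend; auto.
  - exists ((2/3 + 0/3) / B). split; [|reflexivity].
    apply Cantor_div_pow3, Cantor_prepend, Cantor_0; auto.
  - rewrite four_squares_identity, Hcdd' by lra. field. nra.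
Qed.
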